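(* Let $n\geqslant1$, $a,b>0$, $\sigma\in(0,1)\cup(1,+\infty)$, and let $\widehat v(t,\xi)$ be the partial Fourier transform of the solution of $v_{tt}-a\Delta v+b(-\Delta)^\sigma v+v_t=0$, $v(0)=v_0$, $v_t(0)=v_1$, i.e. $\widehat v=\frac{\lambda_+e^{\lambda_-t}-\lambda_-e^{\lambda_+t}}{\lambda_+-\lambda_-}\widehat v_0+\frac{e^{\lambda_+t}-e^{\lambda_-t}}{\lambda_+-\lambda_-}\widehat v_1$ with $\lambda_\pm=\frac12\big(-1\pm\sqrt{1-4(a|\xi|^2+b|\xi|^{2\sigma})}\big)$. There exist $\varepsilon_0>0$ sufficiently small and constants $c,C>0$ such that for all $t\geqslant0$ and all $\xi$ with $|\xi|\leqslant\varepsilon_0$: if $\sigma\in(0,1)$, $$|\widehat v|\leqslant C e^{-c|\xi|^{2\sigma}t}(|\widehat v_0|+|\widehat v_1|),\quad \big|\widehat v-e^{-b|\xi|^{2\sigma}t}(\widehat v_0+\widehat v_1)\big|\leqslant C\big(e^{-ct}+|\xi|^{\min\{2-2\sigma,2\sigma\}}e^{-c|\xi|^{2\sigma}t}\big)(|\widehat v_0|+|\widehat v_1|);$$ if $\sigma\in(1,+\infty)$, $$|\widehat v|\leqslant C e^{-c|\xi|^{2}t}(|\widehat v_0|+|\widehat v_1|),\quad \big|\widehat v-e^{-a|\xi|^{2}t}(\widehat v_0+\widehat v_1)\big|\leqslant C\big(e^{-ct}+|\xi|^{\min\{2,2\sigma-2\}}e^{-c|\xi|^{2}t}\big)(|\widehat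 v_0|+|\widehat v_1|).$$
   Context: $(-\Delta)^\sigma$ is the Fourier multiplier with symbol $|\xi|^{2\sigma}$. *)

From mathcomp Require Import all_boot all_order all_algebra.
From mathcomp Require Import all_classical all_reals all_analysis.
From mathcomp Require Export complex.
Set Implicit Arguments. Unset Strict Implicit. Unset Printing Implicit Defensive.
Import Order.TTheory GRing.Theory Num.Theory.
Local Open Scope ring_scope.

Section Defs.
Variable R : realType.

Definition enorm (n : nat) (xi : 'rV[R]_n) : R :=
  Num.sqrt (\sum_(i < n) xi ord0 i ^+ 2).

Definition cmod (z : R[i]) : R := Normc.normc z.

Definition expC (z : R[i]) : R[i] :=
  ((real_complex R (expR (complex.Re z))) * Complex (cos (complex.Im z)) (sin (complex.Im z)))%R.

(* symbol of -a Delta + b (-Delta)^sigma at |xi| = r : a r^2 + b r^(2 sigma) *)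
Definition symb (a b sigma r : R) : R := a * r ^+ 2 + b * powR r (2 * sigma).

Definition lam_plus (a b sigma r : R) : R[i] :=
  ((- 1 + sqrtc (real_complex R (1 - 4 * symb a b sigma r))) / 2%:R)%R.
Definition lam_minus (a b sigma r : R) : R[i] :=
  ((- 1 - sqrtc (real_complex R (1 - 4 * symb a b sigma r))) / 2%:R)%R.

(* partial Fourier transform of the solution at (t, xi), given
   v0h = \hat v_0(xi), v1h = \hat v_1(xi) *)
Definition vhat (n : nat) (a b sigma t : R) (xi : 'rV[R]_n) (v0h v1h : R[i])
  : R[i] :=
  let r := enorm xi in
  let lp := lam_plus a b sigma r in
  let lm := lam_minus a b sigma r in
  (((lp * expC (lm * real_complex R t) - lm * expC (lp * real_complex R t)) / (lp - lm)) * v0h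
   + ((expC (lp * real_complex R t) - expC (lm * real_complex R t)) / (lp - lm)) * v1h)%R.

End Defs.

(* For |ξ| small the symbol s = a|ξ|^2 + b|ξ|^{2σ} is at most 3/16, so λ± are real,
   λ- <= -1/2 and -s - 2s^2 <= λ+ <= -s.  The coefficients of v̂0 and v̂1 then both equal
   e^{λ+ t} up to O(s e^{λ+ t} + e^{λ- t}).  Split s = β g + (remainder), where β g is the
   dominant term (β g = b|ξ|^{2σ} if σ < 1, a|ξ|^2 if σ > 1); the remainder and s^2 are
   O(ρ g) with ρ = |ξ|^{min(2-2σ, 2σ)}, resp. |ξ|^{min(2, 2σ-2)}.  Hence
   0 <= e^{-βgt} - e^{λ+ t} <= O(ρ g t e^{-βgt}), and g t e^{-βgt} <= (2/β) e^{-βgt/2}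
   trades the factor t for half of the decay rate. *)

From mathcomp Require Import all_boot all_order all_algebra.
From mathcomp Require Import all_classical all_reals all_analysis.
From mathcomp Require Import complex.
From mathcomp Require Import ring lra.
Set Implicit Arguments. Unset Strict Implicit. Unset Printing Implicit Defensive.
Import Order.TTheory GRing.Theory Num.Theory.
Local Open Scope ring_scope.

Section KernelEstimates.
Variable R : realType.
Implicit Types s t x y : R.

Lemma expR_sub_le x y : expR x - expR y <= (x - y) * expR x.
Proof.
have := expR_ge1Dx (y - x); rewrite -(ler_pM2l (expR_gt0 x)) -expRD subrKC.
lra.
Qed.

Lemma mulr_expRN_le1 x : x * expR (- x) <= 1.
Proof.
have := expR_ge1Dx x; rewrite -(ler_pM2r (expR_gt0 (- x))) -expRD subrr expR0.
have := expR_gt0 (- x); nra.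
Qed.

Lemma mulr_expR_le (be c y : R) : 0 < be -> c <= be / 2 -> 0 <= y ->
  y * expR (- be * y) <= 2 / be * expR (- c * y).
Proof.
move=> hbe hc hy; set w := be * y / 2.
have hbe2 : 0 <= 2 / be by apply: divr_ge0; lra.
have hye : y * expR (- w) <= 2 / be.
  rewrite [y](_ : _ = 2 / be * w); last by rewrite /w; field; lra.
  by rewrite -(mulrA (2 / be)) -[leRHS]mulr1; apply/ler_wpM2l/mulr_expRN_le1.
have -> : expR (- be * y) = expR (- w) * expR (- w).
  by rewrite -expRD /w; congr expR; field.
rewrite mulrA; apply: le_trans (ler_wpM2r (ltW (expR_gt0 _)) hye) _.
by apply: ler_wpM2l; rewrite // ler_expR /w; nra.
Qed.

Definition root_plus s := (- 1 + Num.sqrt (1 - 4 * s)) / 2.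
Definition root_minus s := (- 1 - Num.sqrt (1 - 4 * s)) / 2.

Definition kernel_v0 s t :=
  (root_plus s * expR (root_minus s * t) - root_minus s * expR (root_plus s * t))
  / (root_plus s - root_minus s).
Definition kernel_v1 s t :=
  (expR (root_plus s * t) - expR (root_minus s * t)) / (root_plus s - root_minus s).

Lemma sqrt_discr_bounds s : 0 <= s <= 3/16 ->
  1/2 <= Num.sqrt (1 - 4 * s) /\ 1 - 2 * s - 4 * s ^+ 2 <= Num.sqrt (1 - 4 * s) <= 1 - 2 * s.
Proof.
case/andP=> hs0 hs1; set d := Num.sqrt _.
have hd2 : d ^+ 2 = 1 - 4 * s by rewrite sqr_sqrtr //; lra.
have hd0 : 0 <= d by rewrite sqrtr_ge0.
have hd1 : 1/2 <= d by nra.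
split=> //; apply/andP; split; nra.
Qed.

Lemma root_plus_bounds s : 0 <= s <= 3/16 -> - s - 2 * s ^+ 2 <= root_plus s <= - s.
Proof.
move=> hs; have [_ /andP[hl hu]] := sqrt_discr_bounds hs.
by rewrite /root_plus; apply/andP; split; lra.
Qed.

Lemma root_minus_le s : 0 <= s <= 3/16 -> root_minus s <= - 1/2.
Proof. by move=> hs; have [hd _] := sqrt_discr_bounds hs; rewrite /root_minus; lra. Qed.

Lemma root_plus_sub_minus s : root_plus s - root_minus s = Num.sqrt (1 - 4 * s).
Proof. by rewrite /root_plus /root_minus; field. Qed.

Lemma root_minus_le_plus s : 0 <= s <= 3/16 -> root_minus s <= root_plus s.
Proof. by rewrite /root_minus /root_plus => /sqrt_discr_bounds[hd _]; lra. Qed.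

Lemma normr_root_plus_div_le s : 0 <= s <= 3/16 ->
  `|root_plus s / Num.sqrt (1 - 4 * s)| <= 4 * s.
Proof.
move=> hs; have [hd _] := sqrt_discr_bounds hs.
have /andP[hpl hpu] := root_plus_bounds hs.
have hd0 : 0 < Num.sqrt (1 - 4 * s) by lra.
have hp0 : root_plus s <= 0 by case/andP: hs => *; lra.
rewrite normrM normfV (ler0_norm hp0) (gtr0_norm hd0) ler_pdivrMr //.
case/andP: hs => *; nra.
Qed.

Lemma kernel_v0_near s t : 0 <= s <= 3/16 -> 0 <= t ->
  `|kernel_v0 s t - expR (root_plus s * t)| <= 4 * s * expR (root_plus s * t).
Proof.
move=> hs ht; have [hd _] := sqrt_discr_bounds hs.
have hq := normr_root_plus_div_le hs.
have hYX : expR (root_minus s * t) <= expR (root_plus s * t).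
  by rewrite ler_expR ler_wpM2r // root_minus_le_plus.
have hm : root_minus s = root_plus s - Num.sqrt (1 - 4 * s) by rewrite -root_plus_sub_minus; ring.
rewrite /kernel_v0 root_plus_sub_minus.
set d := Num.sqrt _ in hd hq hm *; set p := root_plus s in hq hm *.
set X := expR (p * t) in hYX *; set Y := expR (root_minus s * t) in hYX *.
have -> : (p * Y - root_minus s * X) / d - X = p / d * (Y - X) by rewrite hm; field; lra.
have hY0 : 0 < Y := expR_gt0 _.
rewrite normrM; apply: ler_pM => //; rewrite ler_norml; lra.
Qed.

Lemma kernel_v1_near s t : 0 <= s <= 3/16 -> 0 <= t ->
  `|kernel_v1 s t - expR (root_plus s * t)|
    <= 8 * s * expR (root_plus s * t) + 2 * expR (root_minus s * t).
Proof.
move=> hs ht; have [hd _] := sqrt_discr_bounds hs.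
have hq := normr_root_plus_div_le hs.
have hp0 : root_plus s <= 0 by have := root_plus_bounds hs; case/andP: hs => *; lra.
rewrite /kernel_v1 root_plus_sub_minus.
set d := Num.sqrt _ in hd hq *; set p := root_plus s in hq hp0 *.
have hY0 : 0 < expR (root_minus s * t) := expR_gt0 _.
set X := expR (p * t); set Y := expR (root_minus s * t) in hY0 *.
have hX0 : 0 < X := expR_gt0 _.
have -> : (X - Y) / d - X = - 2 * (p / d) * X - Y / d.
  by rewrite /p /root_plus -/d; field; lra.
have hYd : 0 <= Y / d <= 2 * Y by rewrite divr_ge0 ?ler_pdivrMr /=; nra.
have hpd : p / d <= 0 by rewrite mulr_le0_ge0 // invr_ge0; lra.
rewrite ler0_norm // in hq.
rewrite ler_norml; apply/andP; split; nra.
Qed.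

Lemma expR_root_plus_bounds s t (be c K g rho : R) :
  0 <= s <= 3/16 -> 0 <= t -> 0 < be -> c <= be / 2 -> 0 <= K -> 0 <= g -> 0 <= rho ->
  be * g <= s -> s + 2 * s ^+ 2 <= be * g + K * rho * g ->
  let X := expR (root_plus s * t) in let E := expR (- be * g * t) in
  X <= E /\ E - X <= 2 * K / be * (rho * expR (- c * g * t)).
Proof.
move=> hs ht hbe hcb hK hg hrho hbg hrem X E.
have /andP[hpl hpu] := root_plus_bounds hs.
split; first by rewrite ler_expR; nra.
apply: le_trans (expR_sub_le _ _) _.
have hgt : 0 <= g * t by exact: mulr_ge0.
have hgE := mulr_expR_le hbe hcb hgt; rewrite !mulrA -/E in hgE.
have hKr : 0 <= K * rho by exact: mulr_ge0.
have : - be * g * t - root_plus s * t <= K * rho * (g * t) by case/andP: hs => *; nra.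
move/(ler_wpM2r (ltW (expR_gt0 (- be * g * t)))); rewrite -/E.
have := ler_wpM2l hKr hgE; lra.
Qed.

Lemma kernel_estimates s t (be c K g rho : R) :
  0 <= s <= 3/16 -> 0 <= t -> 0 < be -> c <= be / 2 -> c <= 1/2 ->
  0 <= K -> 0 <= g -> 0 <= rho ->
  be * g <= s -> s + 2 * s ^+ 2 <= be * g + K * rho * g -> s <= K * rho ->
  let C := 5 + 8 * K + 2 * K / be in
  let F := expR (- c * g * t) in
  let E := expR (- be * g * t) in
  [/\ `|kernel_v0 s t| <= C * F, `|kernel_v1 s t| <= C * F,
      `|kernel_v0 s t - E| <= C * (expR (- c * t) + rho * F) &
      `|kernel_v1 s t - E| <= C * (expR (- c * t) + rho * F)].
Proof.
move=> hs ht hbe hcb hc2 hK hg hrho hbg hrem hsK C F E.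
have [hXE hEX] := expR_root_plus_bounds hs ht hbe hcb hK hg hrho hbg hrem.
have hYX : expR (root_minus s * t) <= expR (root_plus s * t).
  by rewrite ler_expR ler_wpM2r // root_minus_le_plus.
have hYG : expR (root_minus s * t) <= expR (- c * t).
  by rewrite ler_expR ler_wpM2r //; have := root_minus_le hs; lra.
have hEF : E <= F by rewrite ler_expR -!mulrA ler_wpM2r ?mulr_ge0 //; lra.
have /ler_normlP[hA1 hA2] := kernel_v0_near hs ht.
have /ler_normlP[hB1 hB2] := kernel_v1_near hs ht.
move: hA1 hA2 hB1 hB2 hXE hEX hYX hYG; rewrite -/E -/F.
set X := expR (root_plus s * t); set Y := expR (root_minus s * t); set G := expR (- c * t).
move=> hA1 hA2 hB1 hB2 hXE hEX hYX hYG.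
have hX0 : 0 < X := expR_gt0 _.
have hY0 : 0 < Y := expR_gt0 _.
have hF0 : 0 < F := expR_gt0 _.
have hG0 : 0 < G := expR_gt0 _.
have hsX : s * X <= K * rho * F.
  apply: le_trans (ler_wpM2r (ltW hX0) hsK) _; apply: ler_wpM2l; [exact: mulr_ge0 | lra].
have hsX3 : s * X <= 3/16 * X by nra.
have hKb : 0 <= 2 * K / be by apply: divr_ge0; lra.
have hrF : 0 <= rho * F by nra.
have [hKF hKrF hKG] : [/\ 0 <= K * F, 0 <= K * rho * F & 0 <= K * G] by split; nra.
have [hKbF hKbrF hKbG] : [/\ 0 <= 2 * K / be * F, 0 <= 2 * K / be * (rho * F)
  & 0 <= 2 * K / be * G] by split; nra.
rewrite /C !mulrDl !mulrDr.
by split; rewrite ler_norml; apply/andP; split; lra.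
Qed.

End KernelEstimates.

Section SmallFrequency.
Variable R : realType.

Lemma ge0_ger_powR (r x y : R) : 0 <= r <= 1 -> 0 < y -> y <= x -> r `^ x <= r `^ y.
Proof.
case/andP=> r0 r1 hy hyx; have [->|rn0] := eqVneq r 0.
  by rewrite !powR0 // gt_eqF //; apply: lt_le_trans hyx.
by apply: ger_powR => //; rewrite r1 andbT lt0r rn0.
Qed.

Lemma powR_le_of_root_le (r q e : R) : 0 <= r -> 0 < q -> 0 < e ->
  r <= q `^ e^-1 -> r `^ e <= q.
Proof.
move=> r0 q0 e0 hr; rewrite -[q](powRr1 (ltW q0)) -(mulVf (lt0r_neq0 e0)) powRrM.
by apply: ge0_ler_powR; rewrite ?nnegrE ?powR_ge0 // ltW.
Qed.

Lemma small_symbol_bounds (al be e1 e2 r : R) :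
  0 < al -> 0 < be -> 0 < e2 -> e2 < e1 ->
  0 <= r <= 1 -> (al + be) * r `^ e2 <= 3/16 ->
  let s := al * r `^ e1 + be * r `^ e2 in
  let g := r `^ e2 in let rho := r `^ Num.min (e1 - e2) e2 in
  let K := al + be + 2 * (al + be) ^+ 2 in
  [/\ 0 <= s <= 3/16, be * g <= s, s + 2 * s ^+ 2 <= be * g + K * rho * g & s <= K * rho].
Proof.
move=> hal hbe he2 he12 hr hq /=.
have hk : 0 < Num.min (e1 - e2) e2 by rewrite lt_min subr_gt0 he12.
have hh : r `^ e1 = r `^ (e1 - e2) * r `^ e2.
  by rewrite -powRD subrK // gt_eqF //; apply: lt_trans he12.
have hgr : r `^ e2 <= r `^ Num.min (e1 - e2) e2.
  by apply: ge0_ger_powR; rewrite ?ge_min ?lexx ?orbT.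
have hhr : r `^ (e1 - e2) <= r `^ Num.min (e1 - e2) e2.
  by apply: ge0_ger_powR; rewrite ?ge_min ?lexx // subr_gt0.
have hhg : r `^ e1 <= r `^ e2 by apply: ge0_ger_powR => //; exact: ltW.
rewrite hh in hhg *.
set h := r `^ (e1 - e2) in hhg hhr *; set g := r `^ e2 in hhg hgr hq *.
set rho := r `^ Num.min _ _ in hgr hhr *.
have [h0 g0 rho0] : [/\ 0 <= h, 0 <= g & 0 <= rho] by split; exact: powR_ge0.
have hhg0 : 0 <= h * g by exact: mulr_ge0.
have hhgr : h * g <= rho * g by exact: ler_wpM2r.
have hrg0 : 0 <= rho * g by exact: mulr_ge0.
set s := al * (h * g) + be * g.
have hs0 : 0 <= s by rewrite /s; nra.
have hsg : s <= (al + be) * g by rewrite /s; nra.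
have hrem : s - be * g <= al * (rho * g) by rewrite /s; nra.
have hs2 : s ^+ 2 <= (al + be) ^+ 2 * (rho * g).
  have : s ^+ 2 <= ((al + be) * g) ^+ 2 by rewrite ler_sqr ?nnegrE //; nra.
  by rewrite exprMn => /le_trans; apply; apply: ler_wpM2l; [exact: sqr_ge0 | nra].
have hab2 : 0 <= (al + be) ^+ 2 by exact: sqr_ge0.
split.
- by apply/andP; split; lra.
- by rewrite /s; nra.
- nra.
- nra.
Qed.

End SmallFrequency.

Section FourierSolution.
Variable R : realType.
Local Open Scope complex_scope.

Lemma cmod_ge0 (z : R[i]) : 0 <= cmod z.
Proof. by case: z => x y; rewrite /cmod sqrtr_ge0. Qed.

Lemma cmodD (z w : R[i]) : cmod (z + w) <= cmod z + cmod w.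
Proof. exact: le_normcD. Qed.

Lemma cmod_realM (x : R) (z : R[i]) : cmod (x%:C * z) = `|x| * cmod z.
Proof. by rewrite /cmod Normc.normcM /= expr0n /= addr0 sqrtr_sqr. Qed.

Lemma cmod_real_lincomb (x y M : R) (z w : R[i]) : `|x| <= M -> `|y| <= M ->
  cmod (x%:C * z + y%:C * w) <= M * (cmod z + cmod w).
Proof.
move=> hx hy; apply: le_trans (cmodD _ _) _.
by rewrite !cmod_realM mulrDr; apply: lerD; apply: ler_wpM2r => //; exact: cmod_ge0.
Qed.

Lemma expC_real (x : R) : expC x%:C = (expR x)%:C.
Proof. by rewrite /expC /= cos0 sin0 mulr1. Qed.

Lemma lam_plus_real (a b sigma r : R) : 4 * symb a b sigma r <= 1 ->
  lam_plus a b sigma r = (root_plus (symb a b sigma r))%:C.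
Proof.
move=> hs; rewrite /lam_plus sqrtc_sqrtr ?lecR ?subr_ge0 //=.
by rewrite /root_plus rmorphM rmorphD rmorphN1 fmorphV rmorph_nat.
Qed.

Lemma lam_minus_real (a b sigma r : R) : 4 * symb a b sigma r <= 1 ->
  lam_minus a b sigma r = (root_minus (symb a b sigma r))%:C.
Proof.
move=> hs; rewrite /lam_minus sqrtc_sqrtr ?lecR ?subr_ge0 //=.
by rewrite /root_minus rmorphM rmorphB rmorphN1 fmorphV rmorph_nat.
Qed.

Lemma vhat_real n (a b sigma t : R) (xi : 'rV[R]_n) (v0 v1 : R[i]) :
  let s := symb a b sigma (enorm xi) in 4 * s <= 1 ->
  vhat a b sigma t xi v0 v1 = (kernel_v0 s t)%:C * v0 + (kernel_v1 s t)%:C * v1.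
Proof.
move=> s hs; rewrite /vhat /= lam_plus_real // lam_minus_real // -!rmorphM !expC_real.
by rewrite /kernel_v0 /kernel_v1 -/s !(rmorphM, rmorphB, fmorphV).
Qed.

Lemma vhat_estimates n (a b sigma al be e1 e2 : R) :
  0 < al -> 0 < be -> 0 < e2 -> e2 < e1 ->
  (forall r, 0 <= r -> symb a b sigma r = al * r `^ e1 + be * r `^ e2) ->
  exists eps0 c C : R, [/\ 0 < eps0, 0 < c & 0 < C] /\
  forall t (xi : 'rV[R]_n) (v0 v1 : R[i]), 0 <= t -> enorm xi <= eps0 ->
    let r := enorm xi in
    let v := vhat a b sigma t xi v0 v1 in
    let D := cmod v0 + cmod v1 in
    cmod v <= C * expR (- c * r `^ e2 * t) * D /\
    cmod (v - (expR (- be * r `^ e2 * t))%:C * (v0 + v1))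
      <= C * (expR (- c * t) + r `^ Num.min (e1 - e2) e2 * expR (- c * r `^ e2 * t)) * D.
Proof.
move=> hal hbe he2 he12 hsymb.
have hab : 0 < al + be by lra.
set q := 3 / (16 * (al + be)).
have hq : 0 < q by apply: divr_gt0; lra.
set K := al + be + 2 * (al + be) ^+ 2.
have hK : 0 <= K by have := sqr_ge0 (al + be); rewrite /K; lra.
set c := Num.min (be / 2) (1 / 2).
have [hc1 hc2] : c <= be / 2 /\ c <= 1 / 2 by rewrite !ge_min !lexx orbT.
exists (Num.min 1 (q `^ e2^-1)), c, (5 + 8 * K + 2 * K / be); split.
  have hKb : 0 <= 2 * K / be by apply: divr_ge0; lra.
  by split; [rewrite lt_min ltr01 powR_gt0 | rewrite lt_min; apply/andP; split; lra | lra].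
move=> t xi v0 v1 ht; rewrite le_min => /andP[hr1 hrq] r v D.
have hr0 : 0 <= r := sqrtr_ge0 _.
have hg : (al + be) * r `^ e2 <= 3/16.
  have -> : 3/16 = (al + be) * q by rewrite /q; field; lra.
  exact/(ler_wpM2l (ltW hab))/powR_le_of_root_le.
have hr01 : 0 <= r <= 1 by rewrite hr0 hr1.
have [hs hbg hrem hsK] := small_symbol_bounds hal hbe he2 he12 hr01 hg.
rewrite -hsymb // in hs hbg hrem hsK.
have [k0 k1 k0E k1E] :=
  kernel_estimates hs ht hbe hc1 hc2 hK (powR_ge0 _ _) (powR_ge0 _ _) hbg hrem hsK.
rewrite /v vhat_real; last by case/andP: hs => *; lra.
split; first exact: cmod_real_lincomb.
set s := symb a b sigma r in k0E k1E *; set E := expR (- be * r `^ e2 * t) in k0E k1E *.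
have -> : (kernel_v0 s t)%:C * v0 + (kernel_v1 s t)%:C * v1 - E%:C * (v0 + v1)
    = (kernel_v0 s t - E)%:C * v0 + (kernel_v1 s t - E)%:C * v1.
  by rewrite !rmorphB; ring.
exact: cmod_real_lincomb.
Qed.

End FourierSolution.

Theorem proposition3p1 (R : realType) (n : nat) (a b sigma : R)
  (hn : (1 <= n)%N) (ha : 0 < a) (hb : 0 < b)
  (hs0 : 0 < sigma) (hs1 : sigma != 1) :
  exists eps0 c C : R, [/\ 0 < eps0, 0 < c & 0 < C] /\
  forall (t : R) (xi : 'rV[R]_n) (v0h v1h : R[i]),
    0 <= t -> enorm xi <= eps0 ->
    let r := enorm xi in
    let v := vhat a b sigma t xi v0h v1h in
    let D := cmod v0h + cmod v1h in
    (sigma < 1 ->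
       cmod v <= C * expR (- c * powR r (2 * sigma) * t) * D /\
       cmod (v - (real_complex R (expR (- b * powR r (2 * sigma) * t))) * (v0h + v1h))%R
         <= C * (expR (- c * t)
                 + powR r (Num.min (2 - 2 * sigma) (2 * sigma))
                   * expR (- c * powR r (2 * sigma) * t)) * D) /\
    (1 < sigma ->
       cmod v <= C * expR (- c * r ^+ 2 * t) * D /\
       cmod (v - (real_complex R (expR (- a * r ^+ 2 * t))) * (v0h + v1h))%R
         <= C * (expR (- c * t)
                 + powR r (Num.min 2 (2 * sigma - 2))
                   * expR (- c * r ^+ 2 * t)) * D).
Proof.
have [lt_sigma1 | gt_sigma1] : sigma < 1 \/ 1 < sigma by move: hs1; rewrite neq_lt => /orP.
- have [|||||eps0 [c [C [hpos hest]]]] := @vhat_estimates R n a b sigma a b 2 (2 * sigma).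
  1-4: lra.
  + by move=> r hr; rewrite /symb powR_mulrn.
  exists eps0, c, C; split=> // t xi v0 v1 ht hxi r v D.
  by split=> hsigma; [exact: hest | lra].
- have [|||||eps0 [c [C [hpos hest]]]] := @vhat_estimates R n a b sigma b a (2 * sigma) 2.
  1-4: lra.
  + by move=> r hr; rewrite /symb addrC powR_mulrn.
  exists eps0, c, C; split=> // t xi v0 v1 ht hxi r v D.
  split=> hsigma; first lra.
  by have := hest t xi v0 v1 ht hxi; rewrite /= powR_mulrn ?sqrtr_ge0 // minC.
Qed.
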